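(* Let $q$, $\Delta$, $A_E\in\mathbb{R}_{\ge0}^{q\times q}$ and $A_V\in\mathbb{R}_{\ge0}^q$ be constants. Then there is a constant $b=b_{q,\Delta,A_E,A_V}>0$ such that for every graph $G$ of maximum degree $\Delta$, every permissive spin system $(G,q,A_E,A_V)$ is $b$-marginally bounded.
   Context: A spin system $(G,q,A_E,A_V)$ on $G=(V,E)$ assigns to $\sigma\in[q]^V$ the weight $w(\sigma)=\prod_{\{u,v\}\in E}A_E(\sigma(u),\sigma(v))\prod_{v\in V}A_V(\sigma(v))$, with Gibbs distribution $\mu\propto w$. For $\Lambda\subseteq V$ and any (possibly infeasible) $\sigma\in[q]^\Lambda$, let $w^\sigma(\tau)=\mathbf 1[\tau|_\Lambda=\sigma]\prod_{v\notin\Lambda}A_V(\tau(v))\prod_{\{u,v\}\in E,u\notin\Lambda,v\in\Lambda}A_E(\tau(u),\sigma(v))\prod_{\{u,v\}\in E,u,v\notin\Lambda}A_E(\tau(u),\tau(v))$ for $\tau\in[q]^V$, $Z^\sigma=\sum_\tau w^\sigma(\tau)$ and $\mu^\sigma=w^\sigma/Z^\sigma$. The system is permissive if $Z^\sigma>0$ for all $\Lambda\subseteq V$ and $\sigma\in[q]^\Lambda$. Let $\mu^\sigma_v$ be the marginal of $\mu^\sigma$ at $v$. The system is $b$-marginally bounded if for every $\Lambda\subseteq V$, $\sigma\in[q]^\Lambda$, $v\notin\Lambda$ and $c\in[q]$ with $\mu^\sigma_v(c)>0$, one has $\mu^\sigma_v(c)\ge b$. *)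

From mathcomp Require Import all_boot all_order all_algebra.
From mathcomp Require Import reals.
Set Implicit Arguments. Unset Strict Implicit. Unset Printing Implicit Defensive.
Import Order.TTheory GRing.Theory Num.Theory.
Local Open Scope ring_scope.

Section SpinSystem.
Variables (R : realType) (q : nat) (AE : 'I_q -> 'I_q -> R) (AV : 'I_q -> R).
Variables (V : finType) (e : rel V).

(* A boundary condition sigma in [q]^Lambda is represented by a total
   function V -> 'I_q of which only the values on Lambda are used. *)

Definition wcond (L : {set V}) (sigma tau : V -> 'I_q) : R :=
  (if [forall v in L, tau v == sigma v] then 1 else 0)
  * (\prod_(v : V | v \notin L) AV (tau v))
  * (\prod_(u : V | u \notin L) \prod_(v : V | (v \in L) && e u v)
        AE (tau u) (sigma v))
  * (\prod_(u : V | u \notin L) \prod_(v : V | [&& v \notin L, e u v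
        & (val (enum_rank u) < val (enum_rank v))%N]) AE (tau u) (tau v)).

Definition Zcond (L : {set V}) (sigma : V -> 'I_q) : R :=
  \sum_(tau : {ffun V -> 'I_q}) wcond L sigma tau.

Definition marginal (L : {set V}) (sigma : V -> 'I_q) (v : V) (c : 'I_q) : R :=
  (\sum_(tau : {ffun V -> 'I_q} | tau v == c) wcond L sigma tau)
  / Zcond L sigma.

Definition permissive : Prop :=
  forall (L : {set V}) (sigma : V -> 'I_q), 0 < Zcond L sigma.

Definition marginally_bounded (b : R) : Prop :=
  forall (L : {set V}) (sigma : V -> 'I_q) (v : V) (c : 'I_q),
    v \notin L -> 0 < marginal L sigma v c -> b <= marginal L sigma v c.

End SpinSystem.

Definition max_degree_le (V : finType) (e : rel V) (Delta : nat) : Prop :=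
  forall v : V, (#|[set u | e v u]| <= Delta)%N.

From mathcomp Require Import all_boot all_order all_algebra.
From mathcomp Require Import reals.
From mathcomp Require Import zify ring.
Import Order.TTheory GRing.Theory Num.Theory.
Local Open Scope ring_scope.

Set Implicit Arguments. Unset Strict Implicit. Unset Printing Implicit Defensive.

(* Let m be the smallest positive entry and M the largest entry of A_E and A_V
   (with m <= 1 <= M).  Fix sigma on Lambda, v outside Lambda and a colour c of
   positive marginal, witnessed by a feasible rho with rho(v) = c.  Any feasible
   tau can be repaired into an eta with eta(v) = c that agrees with tau outside
   S = {v} u (N(v) \ Lambda): recolour v by c, and recolour N(v) \ Lambda by a
   feasible configuration for the boundary condition fixing everything else,
   which exists by permissiveness; the edges from v into Lambda are allowed
   because they are allowed in rho.  At most K = (Delta+1)(3 Delta+1) factors of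
   the weight touch S, so m^K w(tau) <= M^K w(eta).  Since each eta arises from
   at most q^(Delta+1) configurations tau, summing gives
   m^K Z <= M^K q^(Delta+1) sum_(eta(v) = c) w(eta). *)

Section NonnegProducts.
Variable R : numDomainType.

Lemma prodr_gt0P (I : finType) (P : pred I) (F : I -> R) :
  (forall i, P i -> 0 <= F i) ->
  reflect (forall i, P i -> 0 < F i) (0 < \prod_(i | P i) F i).
Proof.
move=> F_ge0; apply: (iffP idP) => [|/prodr_gt0 //].
move=> /gt_eqF/negbT/prodf_neq0 F_neq0 i Pi.
by rewrite lt_def F_neq0 ?F_ge0.
Qed.

Lemma ler_prod_perturb (I : finType) (P T : pred I) (f g : I -> R) (a b : R) k :
  0 <= a <= 1 -> 1 <= b ->
  (forall i, P i -> 0 <= f i) -> (forall i, P i -> 0 <= g i) ->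
  (forall i, P i -> ~~ T i -> f i = g i) ->
  (forall i, P i -> T i -> f i <= b /\ a <= g i) ->
  (#|[pred i | P i && T i]| <= k)%N ->
  a ^+ k * \prod_(i | P i) f i <= b ^+ k * \prod_(i | P i) g i.
Proof.
move=> /andP[a_ge0 a_le1] b_ge1 f_ge0 g_ge0 fg fgT cardT.
rewrite (bigID T) [X in _ <= _ * X](bigID T) /=.
have -> : \prod_(i | P i && ~~ T i) f i = \prod_(i | P i && ~~ T i) g i.
  by apply: eq_bigr => i /andP[Pi Ti]; apply: fg.
have f_le : \prod_(i | P i && T i) f i <= b ^+ k.
  apply: le_trans (_ : \prod_(i in [pred i | P i && T i]) b <= _).
    by apply: ler_prod => i /andP[Pi Ti]; rewrite f_ge0 //; case: (fgT i Pi Ti).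
  by rewrite prodr_const ler_weXn2l.
have g_ge : a ^+ k <= \prod_(i | P i && T i) g i.
  apply: le_trans (_ : \prod_(i in [pred i | P i && T i]) a <= _).
    by rewrite prodr_const ler_wiXn2l.
  by apply: ler_prod => i /andP[Pi Ti]; rewrite a_ge0; case: (fgT i Pi Ti).
rewrite !mulrA; apply: ler_wpM2r.
  by apply: prodr_ge0 => i /andP[Pi _]; apply: g_ge0.
rewrite [X in _ <= X]mulrC; apply: ler_pM => //; first exact: exprn_ge0.
by apply: prodr_ge0 => i /andP[Pi _]; apply: f_ge0.
Qed.

End NonnegProducts.

Lemma seq_pos_bounds (R : realDomainType) (s : seq R) :
  exists m M : R, [/\ 0 < m, m <= 1, 1 <= M &
    forall x, x \in s -> x <= M /\ (0 < x -> m <= x)].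
Proof.
elim: s => [|y s [m [M [m_gt0 m_le1 M_ge1 bnd]]]]; first by exists 1, 1.
exists (if 0 < y < m then y else m), (Num.max M y); split.
- by case: ifP => // /andP[].
- by case: ifP => // /andP[_ /ltW/le_trans]; apply.
- by rewrite le_max M_ge1.
move=> x; rewrite inE => /predU1P[-> | /bnd[x_le x_lb]].
  split=> [|y_gt0]; first by rewrite le_max lexx orbT.
  by case: ifP => // /negbT; rewrite y_gt0 -leNgt.
split; first by rewrite le_max x_le.
by move=> /x_lb; case: ifP => // /andP[_ /ltW/le_trans]; apply.
Qed.

Section BoundedDegree.
Variables (V : finType) (e : rel V) (Delta : nat).
Hypotheses (e_sym : symmetric e) (e_deg : max_degree_le e Delta).

Definition free_nbrs (L : {set V}) (v : V) := [set u | e v u & u \notin L].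

Lemma card_free_nbhd L v : (#|v |: free_nbrs L v| <= Delta.+1)%N.
Proof.
rewrite cardsU1 -add1n leq_add ?leq_b1 //; apply: leq_trans (e_deg v).
by apply: subset_leq_card; apply/subsetP => u; rewrite !inE => /andP[].
Qed.

Lemma card_edges_from (S : {set V}) :
  (#|[set p : V * V | (p.1 \in S) && e p.1 p.2]| <= #|S| * Delta)%N.
Proof.
rewrite -sum1_card (eq_bigl (fun p => (p.1 \in S) && e p.1 p.2)) => [|p]; last first.
  by rewrite inE.
rewrite -(pair_big_dep (fun s => s \in S) e (fun _ _ => 1%N)) -sum_nat_const.
apply: leq_sum => s _; rewrite sum1_card; apply: leq_trans (e_deg s).
by apply: subset_leq_card; apply/subsetP => u; rewrite !inE.
Qed.

Lemma card_edges_touching (S : {set V}) :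
  (#|[set p : V * V | e p.1 p.2 && ((p.1 \in S) || (p.2 \in S))]| <= (#|S| * Delta).*2)%N.
Proof.
set from := [set p : V * V | (p.1 \in S) && e p.1 p.2].
have -> : [set p : V * V | e p.1 p.2 && ((p.1 \in S) || (p.2 \in S))] =
    from :|: (fun p : V * V => (p.2, p.1)) @^-1: from.
  apply/setP => -[u x]; rewrite !inE /= [e x u]e_sym.
  by case: (e u x); rewrite ?andbT ?andbF.
rewrite -addnn; apply: leq_trans (leq_card_setU _ _).1 _.
rewrite card_preimset ?leq_add ?card_edges_from //.
by move=> [u x] [x' u'] /= [-> ->].
Qed.

End BoundedDegree.

Lemma card_ffun_agree_off (aT rT : finType) (S : {set aT}) (g : aT -> rT) :
  #|[set f : {ffun aT -> rT} | [forall x in ~: S, f x == g x]]| = (#|rT| ^ #|S|)%N.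
Proof.
pose F x := if x \in S then predT else pred1 (g x).
have -> : [set f : {ffun aT -> rT} | [forall x in ~: S, f x == g x]] = [set f in family F].
  apply/setP => f; rewrite !inE; apply/forall_inP/familyP => [agree x|inF x].
    by rewrite /F; case: ifPn => // xS; rewrite inE agree ?inE.
  by rewrite inE => xS; move: (inF x); rewrite /F (negbTE xS) inE.
rewrite cardsE card_family foldrE big_map big_enum /= -prod_nat_const.
rewrite [RHS]big_mkcond; apply: eq_bigr => x _; rewrite /F.
by case: ifP; rewrite ?card1.
Qed.

Section Weights.
Variables (R : realType) (q : nat) (AE : 'I_q -> 'I_q -> R) (AV : 'I_q -> R).
Hypotheses (AE_ge0 : forall i j, 0 <= AE i j) (AE_sym : forall i j, AE i j = AE j i)
  (AV_ge0 : forall i, 0 <= AV i).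
Variables (V : finType) (e : rel V).
Hypotheses (e_sym : symmetric e) (e_irr : irreflexive e).

Implicit Types (L S : {set V}) (sigma tau eta rho : V -> 'I_q).

Definition vertex_weight L tau := \prod_(u | u \notin L) AV (tau u).

Definition boundary_weight L sigma tau :=
  \prod_(p : V * V | [&& p.1 \notin L, p.2 \in L & e p.1 p.2]) AE (tau p.1) (sigma p.2).

Definition inner_weight L tau :=
  \prod_(p : V * V | [&& p.1 \notin L, p.2 \notin L, e p.1 p.2
     & (val (enum_rank p.1) < val (enum_rank p.2))%N]) AE (tau p.1) (tau p.2).

Lemma wcondE L sigma tau :
  wcond AE AV e L sigma tau =
  (if [forall v in L, tau v == sigma v] then 1 else 0) * vertex_weight L tau
  * boundary_weight L sigma tau * inner_weight L tau.
Proof. by rewrite /wcond /boundary_weight /inner_weight !pair_big_dep. Qed.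

Lemma vertex_weight_ge0 L tau : 0 <= vertex_weight L tau.
Proof. exact: prodr_ge0. Qed.

Lemma boundary_weight_ge0 L sigma tau : 0 <= boundary_weight L sigma tau.
Proof. exact: prodr_ge0. Qed.

Lemma inner_weight_ge0 L tau : 0 <= inner_weight L tau.
Proof. exact: prodr_ge0. Qed.

Lemma wcond_ge0 L sigma tau : 0 <= wcond AE AV e L sigma tau.
Proof.
rewrite wcondE !mulr_ge0 ?vertex_weight_ge0 ?boundary_weight_ge0 ?inner_weight_ge0 //.
by case: ifP.
Qed.

Lemma wcond_gt0P L sigma tau :
  0 < wcond AE AV e L sigma tau <->
  [/\ {in L, tau =1 sigma},
      forall u, u \notin L -> 0 < AV (tau u) &
      forall u x, u \notin L -> e u x -> 0 < AE (tau u) (tau x)].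
Proof.
rewrite wcondE; case: forall_inP => [tau_L | tau_L]; last first.
  split=> [|[agree _ _]]; first by rewrite !mul0r ltxx.
  by case: tau_L => u uL; rewrite agree.
have agree : {in L, tau =1 sigma} by move=> u /tau_L/eqP.
rewrite mul1r !mulr_ge0_gt0 ?mulr_ge0 ?vertex_weight_ge0 ?boundary_weight_ge0
  ?inner_weight_ge0 //.
split=> [/andP[/andP[hV hB] hI] | [_ hV hE]].
- move: hV hB hI => /(prodr_gt0P (fun _ _ => AV_ge0 _)) hV
    /(prodr_gt0P (fun _ _ => AE_ge0 _ _)) hB /(prodr_gt0P (fun _ _ => AE_ge0 _ _)) hI.
  split=> // u x uL eux.
  have [xL | xL] := boolP (x \in L).
    by rewrite (agree x xL); apply: (hB (u, x)); rewrite /= uL xL eux.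
  have [ux | xu | /val_inj/enum_rank_inj ux] :=
    ltngtP (val (enum_rank u)) (val (enum_rank x)).
  + by apply: (hI (u, x)); rewrite /= uL xL eux ux.
  + by rewrite AE_sym; apply: (hI (x, u)); rewrite /= uL xL e_sym eux xu.
  + by rewrite ux e_irr in eux.
- apply/andP; split; [apply/andP; split|]; apply: prodr_gt0 => //.
  + by move=> [u x] /and3P[/= uL xL eux]; rewrite -agree //; apply: hE.
  + by move=> [u x] /and4P[/= uL _ eux _]; apply: hE.
Qed.

Lemma marginal_gt0_witness L sigma v (c : 'I_q) :
  0 < marginal AE AV e L sigma v c ->
  exists2 rho : {ffun V -> 'I_q}, rho v = c & 0 < wcond AE AV e L sigma rho.
Proof.
move=> /gt_eqF/negbT; rewrite /marginal mulf_eq0 negb_or => /andP[/eqP num_neq0 _].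
have [rho /andP[/eqP rho_v rho_pos]] := psumr_neq0P (fun _ _ => wcond_ge0 _ _ _) num_neq0.
by exists rho.
Qed.

Lemma wcond_gt0_glue L sigma v rho tau eta :
  v \notin L -> 0 < wcond AE AV e L sigma rho -> 0 < wcond AE AV e L sigma tau ->
  eta v = rho v -> {in ~: (v |: free_nbrs e L v), eta =1 tau} ->
  (forall u, u \in free_nbrs e L v -> 0 < AV (eta u)) ->
  (forall u x, u \in free_nbrs e L v -> e u x -> 0 < AE (eta u) (eta x)) ->
  0 < wcond AE AV e L sigma eta.
Proof.
move=> vL /wcond_gt0P[rho_L rho_V rho_E] /wcond_gt0P[tau_L tau_V tau_E] eta_v eta_off
  eta_NV eta_NE.
set N := free_nbrs e L v in eta_off eta_NV eta_NE.
have N_E u : e v u -> u \notin L -> u \in N by rewrite inE => -> ->.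
have off u : u != v -> u \notin N -> eta u = tau u.
  by move=> uv uN; apply: eta_off; rewrite in_setC in_setU1 negb_or uv.
have L_off u : u \in L -> u != v /\ u \notin N.
  by move=> uL; split; [apply: contraNneq vL => <- | rewrite inE uL andbF].
apply/wcond_gt0P; split.
- by move=> u uL; have [uv uN] := L_off u uL; rewrite off // tau_L.
- move=> u uL; have [uN | uN] := boolP (u \in N); first exact: eta_NV.
  have [-> | uv] := eqVneq u v; first by rewrite eta_v rho_V.
  by rewrite off // tau_V.
- move=> u x uL eux; have [uN | uN] := boolP (u \in N); first exact: eta_NE.
  have [xN | xN] := boolP (x \in N).
    by rewrite AE_sym; apply: eta_NE; rewrite // e_sym.
  have [uv | uv] := eqVneq u v.
    have xL : x \in L by apply: contraNT xN; apply: N_E; rewrite -uv.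
    have [xv _] := L_off x xL.
    by rewrite uv eta_v off // tau_L // -rho_L // rho_E // -uv.
  have [xv | xv] := eqVneq x v.
    by move: uN; rewrite N_E // -xv e_sym.
  by rewrite !off // tau_E.
Qed.

Lemma exists_local_repair (perm : permissive AE AV e) L sigma v rho
    (tau : {ffun V -> 'I_q}) :
  v \notin L -> 0 < wcond AE AV e L sigma rho ->
  exists eta : {ffun V -> 'I_q}, [/\ eta v = rho v,
    {in ~: (v |: free_nbrs e L v), eta =1 tau} &
    (0 < wcond AE AV e L sigma tau -> 0 < wcond AE AV e L sigma eta)].
Proof.
move=> vL rho_pos; set N := free_nbrs e L v.
pose sigma' u := if u == v then rho v else tau u.
have /gt_eqF/negbT/eqP := perm (~: N) sigma'.
move=> /(psumr_neq0P (fun _ _ => wcond_ge0 _ _ _)).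
move=> [eta /andP[_ /wcond_gt0P[eta_N eta_V eta_E]]].
have vN : v \notin N by rewrite inE e_irr.
have eta_off : {in ~: (v |: N), eta =1 tau}.
  move=> u; rewrite in_setC in_setU1 negb_or => /andP[uv uN].
  by rewrite eta_N ?in_setC // /sigma' (negbTE uv).
have eta_v : eta v = rho v by rewrite eta_N ?in_setC // /sigma' eqxx.
exists eta; split => // tau_pos; apply: (wcond_gt0_glue vL rho_pos tau_pos) => //.
- by move=> u uN; apply: eta_V; rewrite inE negbK.
- by move=> u x uN; apply: eta_E; rewrite inE negbK.
Qed.

Section Bounds.
Variables (Delta : nat) (m M : R).
Hypotheses (e_deg : max_degree_le e Delta)
  (m_gt0 : 0 < m) (m_le1 : m <= 1) (M_ge1 : 1 <= M)
  (AE_lb : forall i j, 0 < AE i j -> m <= AE i j) (AV_lb : forall i, 0 < AV i -> m <= AV i)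
  (AE_ub : forall i j, AE i j <= M) (AV_ub : forall i, AV i <= M).

Lemma wcond_perturb L S sigma tau eta k :
  {subset S <= ~: L} -> (#|S| <= k)%N -> {in ~: S, tau =1 eta} ->
  0 < wcond AE AV e L sigma eta ->
  m ^+ (k * (3 * Delta).+1) * wcond AE AV e L sigma tau <=
  M ^+ (k * (3 * Delta).+1) * wcond AE AV e L sigma eta.
Proof.
move=> SL cardS tau_eta eta_pos; have /wcond_gt0P[eta_L eta_V eta_E] := eta_pos.
have off u : u \notin S -> tau u = eta u by move=> uS; apply: tau_eta; rewrite in_setC.
have tau_L : [forall v in L, tau v == sigma v].
  apply/forall_inP => u uL; rewrite off ?eta_L //.
  by apply: contraL uL => /SL; rewrite in_setC.
have eta_L' : [forall v in L, eta v == sigma v] by apply/forall_inP => u /eta_L ->.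
rewrite !wcondE tau_L eta_L' !mul1r.
have m01 : 0 <= m <= 1 by rewrite ltW.
have hV : m ^+ k * vertex_weight L tau <= M ^+ k * vertex_weight L eta.
  apply: (ler_prod_perturb (T := mem S)) => // [u _ /off -> // | u uL uS | ].
    by split; rewrite ?AV_lb ?eta_V.
  by apply: leq_trans cardS; apply: subset_leq_card; apply/subsetP => u /andP[].
have hB : m ^+ (k * Delta) * boundary_weight L sigma tau <=
          M ^+ (k * Delta) * boundary_weight L sigma eta.
  apply: (ler_prod_perturb (T := fun p => p.1 \in S)) => // [[u x] _ /off /= -> //|
    [u x] /and3P[/= uL xL eux] uS|].
    by split; rewrite ?AE_lb -?eta_L ?eta_E.
  apply: leq_trans (leq_mul cardS (leqnn Delta)).
  apply: leq_trans (card_edges_from e_deg S); apply: subset_leq_card.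
  by apply/subsetP => -[u x] /andP[/and3P[_ _ eux] uS]; rewrite inE uS eux.
have hI : m ^+ (k * Delta).*2 * inner_weight L tau <=
          M ^+ (k * Delta).*2 * inner_weight L eta.
  apply: (ler_prod_perturb (T := fun p => (p.1 \in S) || (p.2 \in S))) => //.
  - by move=> [u x] _; rewrite negb_or => /andP[/off uS /off xS] /=; rewrite uS xS.
  - by move=> [u x] /and4P[/= uL xL eux _] _; split; rewrite ?AE_lb ?eta_E.
  apply: leq_trans (_ : (#|S| * Delta).*2 <= _)%N; last by rewrite leq_double leq_mul.
  apply: leq_trans (card_edges_touching e_sym e_deg S); apply: subset_leq_card.
  by apply/subsetP => -[u x] /andP[/and4P[_ _ eux _] uxS]; rewrite inE eux.
have regroup (a x y z : R) : a ^+ (k * (3 * Delta).+1) * (x * y * z) =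
    (a ^+ k * x) * (a ^+ (k * Delta) * y) * (a ^+ (k * Delta).*2 * z).
  by rewrite (_ : k * _ = k + k * Delta + (k * Delta).*2)%N ?exprD; [ring | lia].
have m_ge0 := ltW m_gt0.
have nV := mulr_ge0 (exprn_ge0 k m_ge0) (vertex_weight_ge0 L tau).
have nB := mulr_ge0 (exprn_ge0 (k * Delta) m_ge0) (boundary_weight_ge0 L sigma tau).
have nI := mulr_ge0 (exprn_ge0 (k * Delta).*2 m_ge0) (inner_weight_ge0 L tau).
by rewrite !regroup; apply: ler_pM (mulr_ge0 nV nB) nI (ler_pM nV nB hV hB) hI.
Qed.

Lemma marginal_lower_bound (perm : permissive AE AV e) L sigma v c :
  v \notin L -> 0 < marginal AE AV e L sigma v c ->
  m ^+ (Delta.+1 * (3 * Delta).+1) / (M ^+ (Delta.+1 * (3 * Delta).+1) * (q ^ Delta.+1)%:R)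
    <= marginal AE AV e L sigma v c.
Proof.
move=> vL marg_pos; have [rho rho_v rho_pos] := marginal_gt0_witness marg_pos.
set K := (Delta.+1 * _)%N; set w := wcond AE AV e L sigma.
set num := \sum_(tau : {ffun V -> 'I_q} | tau v == c) w tau.
set S := v |: free_nbrs e L v.
pose agree (tau eta : {ffun V -> 'I_q}) := [forall u in ~: S, tau u == eta u].
have S_free : {subset S <= ~: L}.
  by move=> u; rewrite !inE => /predU1P[-> | /andP[_ ->]].
have q_gt0 : (0 < q)%N := leq_ltn_trans (leq0n c) (ltn_ord c).
have M_ge0 : 0 <= M ^+ K by rewrite exprn_ge0 // (le_trans ler01).
have local (tau : {ffun V -> 'I_q}) : m ^+ K * w tau <=
    M ^+ K * \sum_(eta : {ffun V -> 'I_q} | (eta v == c) && agree tau eta) w eta.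
  have [eta [eta_v eta_off eta_pos]] := exists_local_repair perm tau vL rho_pos.
  apply: le_trans (_ : M ^+ K * w eta <= _).
    move: (wcond_ge0 L sigma tau); rewrite -/w le_eqVlt => /predU1P[<- | tau_pos].
      by rewrite mulr0 mulr_ge0 ?wcond_ge0.
    apply: wcond_perturb S_free (card_free_nbhd e_deg L v) _ (eta_pos tau_pos).
    by move=> u /eta_off ->.
  rewrite ler_wpM2l // (bigD1 eta) /=; last first.
    by rewrite eta_v rho_v eqxx; apply/forall_inP => u /eta_off ->.
  by rewrite lerDl sumr_ge0 // => *; apply: wcond_ge0.
have Z_le : m ^+ K * Zcond AE AV e L sigma <= M ^+ K * (q ^ Delta.+1)%:R * num.
  rewrite /Zcond mulr_sumr.
  apply: le_trans; first by apply: ler_sum => tau _; exact: local.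
  rewrite /= -mulr_sumr -mulrA ler_wpM2l //.
  rewrite (exchange_big_dep (fun eta : {ffun V -> 'I_q} => eta v == c)) /=; last first.
    by move=> ? ? _ /andP[].
  rewrite mulr_sumr; apply: ler_sum => eta eta_v.
  rewrite (eq_bigl (fun tau : {ffun V -> 'I_q} => tau \in [set tau | agree tau eta]));
    last by move=> tau; rewrite inE eta_v.
  rewrite sumr_const card_ffun_agree_off card_ord mulr_natl.
  apply: ler_wpMn2l (wcond_ge0 _ _ _) _ _ _.
  by rewrite leq_pexp2l ?card_free_nbhd.
have Z_pos := perm L sigma.
have denom_pos : 0 < M ^+ K * (q ^ Delta.+1)%:R.
  by rewrite mulr_gt0 ?exprn_gt0 ?ltr0n ?expn_gt0 ?q_gt0 // (lt_le_trans ltr01).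
rewrite /marginal -/w -/num ler_pdivrMr // mulrAC ler_pdivlMr //.
by rewrite [X in _ <= X]mulrC.
Qed.

End Bounds.

End Weights.


Theorem mainTheorem4 (R : realType) (q Delta : nat)
    (AE : 'I_q -> 'I_q -> R) (AV : 'I_q -> R) :
  (forall i j, 0 <= AE i j) -> (forall i j, AE i j = AE j i) ->
  (forall i, 0 <= AV i) ->
  exists b : R, 0 < b /\
    forall (V : finType) (e : rel V),
      symmetric e -> irreflexive e -> max_degree_le e Delta ->
      permissive AE AV e -> marginally_bounded AE AV e b.
Proof.
case: q AE AV => [|q] AE AV AE_ge0 AE_sym AV_ge0.
  by exists 1; split=> // V e _ _ _ _ L sigma v [].
have [m [M [m_gt0 m_le1 M_ge1 bnd]]] := seq_pos_bounds
  (codom (fun p : 'I_q.+1 * 'I_q.+1 => AE p.1 p.2) ++ codom AV).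
have AE_bnd i j : AE i j <= M /\ (0 < AE i j -> m <= AE i j).
  by apply: bnd; rewrite mem_cat (codom_f (fun p : 'I_q.+1 * 'I_q.+1 => AE p.1 p.2) (i, j)).
have AV_bnd i : AV i <= M /\ (0 < AV i -> m <= AV i).
  by apply: bnd; rewrite mem_cat codom_f orbT.
set K := (Delta.+1 * (3 * Delta).+1)%N.
exists (m ^+ K / (M ^+ K * (q.+1 ^ Delta.+1)%:R)); split.
  by rewrite divr_gt0 ?mulr_gt0 ?exprn_gt0 ?ltr0n ?expn_gt0 // (lt_le_trans ltr01).
move=> V e e_sym e_irr e_deg perm L sigma v c vL.
apply: (marginal_lower_bound AE_ge0 AE_sym AV_ge0 e_sym e_irr e_deg m_gt0 m_le1 M_ge1) => //.
- by move=> i j; case: (AE_bnd i j).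
- by move=> i; case: (AV_bnd i).
- by move=> i j; case: (AE_bnd i j).
- by move=> i; case: (AV_bnd i).
Qed.
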